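(* There exist a separable metrizable $g$-reversible topological group $G$ and a closed subgroup $H$ of $G$ such that $H$ is countable and precompact and $H$ (with the subspace topology) is not $g$-reversible.
   Context: All topological groups are assumed Hausdorff. A topological group $G$ is called $g$-reversible if every continuous automorphism of $G$ (i.e. every continuous group isomorphism of $G$ onto itself) is an open map. A topological group is precompact if for every neighbourhood $U$ of the identity there is a finite $F$ with $FU=G$. *)

From Stdlib Require Import Reals List.
Open Scope R_scope.

Record TopGrp := {
  carrier :> Type;
  gmul : carrier -> carrier -> carrier;
  ginv : carrier -> carrier;
  gone : carrier;
  opn : (carrier -> Prop) -> Prop
}.

Arguments gmul {t}.
Arguments ginv {t}.
Arguments gone {t}.
Arguments opn {t}.

Definition is_group (G : TopGrp) : Prop :=
  (forall x y z : G, gmul x (gmul y z) = gmul (gmul x y) z) /\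
  (forall x : G, gmul gone x = x /\ gmul x gone = x) /\
  (forall x : G, gmul (ginv x) x = gone /\ gmul x (ginv x) = gone).

Definition is_topology (G : TopGrp) : Prop :=
  opn (fun _ : G => True) /\
  (forall U V : G -> Prop, opn U -> opn V -> opn (fun x => U x /\ V x)) /\
  (forall F : (G -> Prop) -> Prop, (forall U, F U -> opn U) ->
     opn (fun x => exists U, F U /\ U x)).

Definition hausdorff (G : TopGrp) : Prop :=
  forall x y : G, x <> y ->
    exists U V : G -> Prop, opn U /\ opn V /\ U x /\ V y /\
      (forall z, U z -> V z -> False).

(* continuity of multiplication G x G -> G for the product topology *)
Definition mul_continuous (G : TopGrp) : Prop :=
  forall (W : G -> Prop) (x y : G), opn W -> W (gmul x y) ->
    exists U V : G -> Prop, opn U /\ opn V /\ U x /\ V y /\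
      (forall u v, U u -> V v -> W (gmul u v)).

Definition continuous {G : TopGrp} (f : G -> G) : Prop :=
  forall U : G -> Prop, opn U -> opn (fun x => U (f x)).

Definition open_map {G : TopGrp} (f : G -> G) : Prop :=
  forall U : G -> Prop, opn U -> opn (fun y => exists x, U x /\ f x = y).

Definition is_topological_group (G : TopGrp) : Prop :=
  is_group G /\ is_topology G /\ hausdorff G /\ mul_continuous G /\
  continuous (@ginv G).

Definition automorphism {G : TopGrp} (f : G -> G) : Prop :=
  (forall x y : G, f (gmul x y) = gmul (f x) (f y)) /\
  (forall x y : G, f x = f y -> x = y) /\
  (forall y : G, exists x, f x = y).

Definition g_reversible (G : TopGrp) : Prop :=
  forall f : G -> G, automorphism f -> continuous f -> open_map f.

Definition neighbourhood_of_one (G : TopGrp) (U : G -> Prop) : Prop :=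
  exists V : G -> Prop, opn V /\ V gone /\ (forall x, V x -> U x).

Definition precompact (G : TopGrp) : Prop :=
  forall U : G -> Prop, neighbourhood_of_one G U ->
    exists F : list G, forall x : G,
      exists a u, In a F /\ U u /\ x = gmul a u.

Definition metrizable (G : TopGrp) : Prop :=
  exists d : G -> G -> R,
    (forall x y, 0 <= d x y) /\
    (forall x y, d x y = 0 <-> x = y) /\
    (forall x y, d x y = d y x) /\
    (forall x y z, d x z <= d x y + d y z) /\
    (forall U : G -> Prop, opn U <->
       (forall x, U x -> exists eps, 0 < eps /\ forall y, d x y < eps -> U y)).

(* has a countable dense subset (given as the range of a sequence; G is
   nonempty, so this covers finite dense sets too) *)
Definition separable (G : TopGrp) : Prop :=
  exists s : nat -> G, forall U : G -> Prop, opn U -> (exists x, U x) ->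
    exists n, U (s n).

Record subgroup (G : TopGrp) := {
  sg_pred : G -> Prop;
  sg_one : sg_pred gone;
  sg_mul : forall x y, sg_pred x -> sg_pred y -> sg_pred (gmul x y);
  sg_inv : forall x, sg_pred x -> sg_pred (ginv x)
}.

Arguments sg_pred {G}.

Definition subTopGrp (G : TopGrp) (H : subgroup G) : TopGrp := {|
  carrier := { x : G | sg_pred H x };
  gmul := fun a b => exist _ (gmul (proj1_sig a) (proj1_sig b))
                        (sg_mul G H _ _ (proj2_sig a) (proj2_sig b));
  ginv := fun a => exist _ (ginv (proj1_sig a)) (sg_inv G H _ (proj2_sig a));
  gone := exist _ gone (sg_one G H);
  opn := fun U => exists V : G -> Prop, opn V /\
           forall a, U a <-> V (proj1_sig a)
|}.

Definition closed_subset {G : TopGrp} (A : G -> Prop) : Prop :=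
  opn (fun x => ~ A x).

Definition countable_set {G : TopGrp} (A : G -> Prop) : Prop :=
  exists s : nat -> G, forall x, A x -> exists n, s n = x.

(* G is the lamplighter group (Z/2) wr Z, whose identity neighbourhoods are the
   subgroups of elements with lighter at 0 and all lamps in [-n, n] off.  Such a
   separating chain of subgroups that is stable under conjugation (up to reindexing)
   defines a metrizable group topology, and G is countable.  The base group
   H = (+)_Z Z/2 is open, hence closed, and carries the product topology of
   {0,1}^Z, hence is precompact.
   An automorphism of G preserves H (the elements of order at most 2) and turns the
   shift by j into the shift by a nonzero multiple of j, so it sends lamps far from
   the origin to lamps far from the origin: every automorphism is continuous, so
   its inverse is too, and G is g-reversible.  On H, the map c |-> c(k) + c(k+1) for
   k >= 0 (and c(k) for k < 0) is a continuous automorphism; but the lamp at n + 1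
   only has the preimage lighting [0, n + 1], so the image of the open set where
   the lamp at 0 is off is not a neighbourhood of the identity. *)

From Stdlib Require Import Reals List ZArith Lia Lra Bool.
From Stdlib Require Import Classical ClassicalEpsilon FunctionalExtensionality
  PropExtensionality ProofIrrelevance FinFun Cantor.


Lemma g_reversible_of_continuous_automorphisms (G : TopGrp) :
  (forall f : G -> G, automorphism f -> continuous f) -> g_reversible G.
Proof.
  intros Hcont f [fM [finj fsurj]] _ U HU.
  destruct (choice _ fsurj) as [g fgK].
  assert (gK : forall x, g (f x) = x) by (intros x; apply finj; now rewrite fgK).
  assert (Hg : automorphism g).
  { split; [|split].
    - intros x y. apply finj. now rewrite fM, !fgK.
    - intros x y E. now rewrite <- (fgK x), <- (fgK y), E.
    - intros x. exists (f x). apply gK. }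
  replace (fun y => exists x, U x /\ f x = y) with (fun y => U (g y)).
  - exact (Hcont g Hg U HU).
  - apply functional_extensionality; intros y. apply propositional_extensionality.
    split.
    + intros Hy. exists (g y). now rewrite fgK.
    + intros [x [Ux <-]]. now rewrite gK.
Qed.

Definition radius (n : nat) : R := / INR (S n).

Lemma radius_gt0 n : 0 < radius n.
Proof. apply Rinv_0_lt_compat, lt_0_INR. lia. Qed.

Lemma radius_le1 n : radius n <= 1.
Proof.
  unfold radius. rewrite <- Rinv_1. apply Rinv_le_contravar; [lra|].
  rewrite S_INR. pose proof (pos_INR n). lra.
Qed.

Lemma radius_le m n : (m <= n)%nat <-> radius n <= radius m.
Proof.
  unfold radius. split; intros H.
  - apply Rinv_le_contravar; [apply lt_0_INR; lia | apply le_INR; lia].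
  - destruct (le_lt_dec m n) as [|Hnm]; [assumption|]. exfalso.
    assert (/ INR (S m) < / INR (S n)); [|lra].
    apply Rinv_lt_contravar; [apply Rmult_lt_0_compat; apply lt_0_INR; lia|].
    apply lt_INR. lia.
Qed.

Lemma radius_lt_exists eps : 0 < eps -> exists n, radius n < eps.
Proof.
  intros Heps. destruct (archimed_cor1 eps Heps) as [n [Hn Hn0]]. exists n.
  eapply Rle_lt_trans; [|exact Hn]. unfold radius.
  apply Rinv_le_contravar; [apply lt_0_INR; lia | apply le_INR; lia].
Qed.

Section GroupFiltration.

Variables (T : Type) (mul : T -> T -> T) (inv : T -> T) (one : T).
Hypothesis mulA : forall x y z, mul x (mul y z) = mul (mul x y) z.
Hypothesis mul1g : forall x, mul one x = x.
Hypothesis mulg1 : forall x, mul x one = x.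
Hypothesis mulVg : forall x, mul (inv x) x = one.
Hypothesis mulgV : forall x, mul x (inv x) = one.

Lemma mulKg x y : mul (inv x) (mul x y) = y.
Proof. now rewrite mulA, mulVg, mul1g. Qed.

Lemma mulKVg x y : mul x (mul (inv x) y) = y.
Proof. now rewrite mulA, mulgV, mul1g. Qed.

Lemma mulgI x y z : mul x y = mul x z -> y = z.
Proof. intros E. now rewrite <- (mulKg x y), E, mulKg. Qed.

Lemma invg_uniq x y : mul x y = one -> inv x = y.
Proof. intros E. apply (mulgI x). now rewrite mulgV, E. Qed.

Lemma invgK x : inv (inv x) = x.
Proof. apply invg_uniq, mulVg. Qed.

Lemma invMg x y : inv (mul x y) = mul (inv y) (inv x).
Proof. apply invg_uniq. now rewrite <- mulA, mulKVg, mulgV. Qed.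

Lemma invg1 : inv one = one.
Proof. apply invg_uniq, mul1g. Qed.

Section Morphism.

Variable f : T -> T.
Hypothesis fM : forall x y, f (mul x y) = mul (f x) (f y).

Lemma morph1 : f one = one.
Proof. apply (mulgI (f one)). now rewrite <- fM, mul1g, mulg1. Qed.

Lemma morphV x : f (inv x) = inv (f x).
Proof. symmetry. apply invg_uniq. now rewrite <- fM, mulgV, morph1. Qed.

End Morphism.

Variable V : nat -> T -> Prop.
Hypothesis V_le : forall m n x, (m <= n)%nat -> V n x -> V m x.
Hypothesis V1 : forall n, V n one.
Hypothesis VM : forall n x y, V n x -> V n y -> V n (mul x y).
Hypothesis VV : forall n x, V n x -> V n (inv x).
Hypothesis V_sep : forall x, (forall n, V n x) -> x = one.
Hypothesis V_conj : forall g n, exists m, forall v, V m v -> V n (mul (mul (inv g) v) g).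

Definition filt_norm (x : T) : R :=
  match excluded_middle_informative (exists n, V n x /\ ~ V (S n) x) with
  | left H => radius (proj1_sig (constructive_indefinite_description _ H))
  | right _ => if excluded_middle_informative (V 0 x) then 0 else 2
  end.

Lemma filt_norm_cases x :
  (filt_norm x = 0 /\ x = one) \/ (filt_norm x = 2 /\ ~ V 0 x) \/
  (exists n, filt_norm x = radius n /\ V n x /\ ~ V (S n) x).
Proof.
  unfold filt_norm.
  destruct (excluded_middle_informative (exists n, V n x /\ ~ V (S n) x)) as [H|H].
  - right; right. destruct (constructive_indefinite_description _ H) as [n Hn].
    now exists n.
  - destruct (excluded_middle_informative (V 0 x)) as [H0|H0]; [left|right; left]; auto.
    split; [reflexivity|]. apply V_sep. intros n; induction n as [|n IHn]; [assumption|].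
    apply NNPP. intros Hn. apply H. now exists n.
Qed.

Lemma filt_norm_le n x : V n x <-> filt_norm x <= radius n.
Proof.
  destruct (filt_norm_cases x) as [[-> ->]|[[-> Hx]|[m [-> [Hm Hm']]]]].
  - split; [intros _; apply Rlt_le, radius_gt0 | intros _; apply V1].
  - split; intros H.
    + exfalso. apply Hx, (V_le 0 n); [lia | assumption].
    + pose proof (radius_le1 n). lra.
  - rewrite <- radius_le. split; intros H.
    + destruct (le_lt_dec n m); [assumption|]. exfalso.
      apply Hm', (V_le (S m) n); [lia | assumption].
    + now apply (V_le n m).
Qed.

Lemma filt_norm_ge0 x : 0 <= filt_norm x.
Proof.
  destruct (filt_norm_cases x) as [[-> _]|[[-> _]|[n [-> _]]]];
    [lra | lra | apply Rlt_le, radius_gt0].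
Qed.

Lemma filt_norm_le2 x : filt_norm x <= 2.
Proof.
  destruct (filt_norm_cases x) as [[-> _]|[[-> _]|[n [-> _]]]];
    [lra | lra | pose proof (radius_le1 n); lra].
Qed.

Lemma filt_norm_eq0 x : filt_norm x = 0 <-> x = one.
Proof.
  destruct (filt_norm_cases x) as [[-> ->]|[[-> Hx]|[n [-> [_ Hn]]]]].
  - tauto.
  - split; intros H; [lra|]. subst x. contradiction (Hx (V1 0)).
  - split; intros H; [pose proof (radius_gt0 n); lra|]. subst x. contradiction (Hn (V1 _)).
Qed.

Lemma filt_norm_sublevel z x y :
  filt_norm x <= filt_norm z -> filt_norm y <= filt_norm z ->
  filt_norm (mul x y) <= filt_norm z /\ filt_norm (inv x) <= filt_norm z.
Proof.
  destruct (filt_norm_cases z) as [[-> _]|[[-> _]|[n [-> _]]]]; intros Hx Hy.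
  - assert (x = one) as -> by (apply filt_norm_eq0; pose proof (filt_norm_ge0 x); lra).
    assert (y = one) as -> by (apply filt_norm_eq0; pose proof (filt_norm_ge0 y); lra).
    rewrite mul1g, invg1. rewrite (proj2 (filt_norm_eq0 one)) by reflexivity. split; lra.
  - split; apply filt_norm_le2.
  - rewrite <- !filt_norm_le in *. auto.
Qed.

Lemma filt_norm_mul x y : filt_norm (mul x y) <= filt_norm x + filt_norm y.
Proof.
  pose proof (filt_norm_ge0 x); pose proof (filt_norm_ge0 y).
  destruct (Rle_dec (filt_norm x) (filt_norm y)).
  - pose proof (filt_norm_sublevel y x y r (Rle_refl _)). lra.
  - pose proof (filt_norm_sublevel x x y (Rle_refl _) ltac:(lra)). lra.
Qed.

Lemma filt_norm_inv x : filt_norm (inv x) = filt_norm x.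
Proof.
  assert (Hle : forall x, filt_norm (inv x) <= filt_norm x).
  { intros y. apply (filt_norm_sublevel y y one (Rle_refl _)).
    rewrite (proj2 (filt_norm_eq0 one)) by reflexivity. apply filt_norm_ge0. }
  apply Rle_antisym; [|rewrite <- (invgK x) at 1]; apply Hle.
Qed.

Definition filt_dist (x y : T) : R := filt_norm (mul (inv x) y).

Lemma filt_dist_triangle x y z : filt_dist x z <= filt_dist x y + filt_dist y z.
Proof.
  unfold filt_dist.
  replace (mul (inv x) z) with (mul (mul (inv x) y) (mul (inv y) z))
    by now rewrite <- mulA, mulKVg.
  apply filt_norm_mul.
Qed.

Lemma filt_dist_sym x y : filt_dist x y = filt_dist y x.
Proof. unfold filt_dist. now rewrite <- filt_norm_inv, invMg, invgK. Qed.

Lemma filt_dist_eq0 x y : filt_dist x y = 0 <-> x = y.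
Proof.
  unfold filt_dist. rewrite filt_norm_eq0. split.
  - intros E. now rewrite <- (mulKVg x y), E, mulg1.
  - intros <-. apply mulVg.
Qed.

Definition filt_open (U : T -> Prop) : Prop :=
  forall x, U x -> exists eps, 0 < eps /\ forall y, filt_dist x y < eps -> U y.

Definition filt_group : TopGrp :=
  {| carrier := T; gmul := mul; ginv := inv; gone := one; opn := filt_open |}.

Lemma filt_openP (U : filt_group -> Prop) :
  opn U <-> forall x, U x -> exists n, forall y, V n (mul (inv x) y) -> U y.
Proof.
  split; intros HU x Ux; destruct (HU x Ux) as [e He].
  - destruct He as [He HUe]. destruct (radius_lt_exists e He) as [n Hn].
    exists n. intros y Hy. apply HUe. apply filt_norm_le in Hy. unfold filt_dist. lra.
  - exists (radius e). split; [apply radius_gt0|]. intros y Hy.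
    apply He, filt_norm_le. unfold filt_dist in Hy. lra.
Qed.

Lemma filt_coset_open n x : @opn filt_group (fun y => V n (mul (inv x) y)).
Proof.
  apply filt_openP. intros y Hy. exists n. intros z Hz.
  rewrite <- (mulKVg y z), mulA. now apply VM.
Qed.

Lemma filt_metrizable : metrizable filt_group.
Proof.
  exists filt_dist. repeat split.
  - intros x y. apply filt_norm_ge0.
  - apply filt_dist_eq0.
  - apply filt_dist_eq0.
  - apply filt_dist_sym.
  - apply filt_dist_triangle.
  - intros HU. exact HU.
  - intros HU. exact HU.
Qed.

Lemma filt_is_topology : is_topology filt_group.
Proof.
  split; [|split].
  - apply filt_openP. intros x _. exists 0%nat. auto.
  - intros U W HU HW. rewrite filt_openP in *. intros x [Ux Wx].
    destruct (HU x Ux) as [m Hm], (HW x Wx) as [n Hn]. exists (Nat.max m n).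
    intros y Hy. split; [apply Hm | apply Hn]; apply (V_le _ (Nat.max m n)); auto; lia.
  - intros F HF. apply filt_openP. intros x [U [FU Ux]].
    destruct (proj1 (filt_openP U) (HF U FU) x Ux) as [n Hn].
    exists n. intros y Hy. exists U. auto.
Qed.

Lemma filt_hausdorff : hausdorff filt_group.
Proof.
  intros x y Hxy.
  assert (Hn : exists n, ~ V n (mul (inv x) y)).
  { apply not_all_ex_not. intros H. apply Hxy.
    now rewrite <- (mulKVg x y), (V_sep _ H), mulg1. }
  destruct Hn as [n Hn].
  exists (fun z => V n (mul (inv x) z)), (fun z => V n (mul (inv y) z)).
  repeat split; try apply filt_coset_open; rewrite ?mulVg; auto.
  intros z Hxz Hyz. apply Hn.
  rewrite <- (mulKVg z y), mulA, <- (invgK (mul (inv z) y)), invMg, invgK.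
  auto.
Qed.

Lemma filt_mul_continuous : mul_continuous filt_group.
Proof.
  intros W x y HW Wxy. cbn in *. rewrite filt_openP in HW.
  destruct (HW _ Wxy) as [n Hn], (V_conj y n) as [m Hm].
  exists (fun u => V m (mul (inv x) u)), (fun v => V n (mul (inv y) v)).
  repeat split; try apply filt_coset_open; rewrite ?mulVg; auto.
  intros u v Hu Hv. apply Hn.
  replace (mul (inv (mul x y)) (mul u v))
    with (mul (mul (mul (inv y) (mul (inv x) u)) y) (mul (inv y) v)); auto.
  now rewrite invMg, <- !mulA, mulKVg.
Qed.

Lemma filt_inv_continuous : continuous (@ginv filt_group).
Proof.
  intros U HU. rewrite filt_openP in *. intros x Ux. cbn in *.
  destruct (HU _ Ux) as [n Hn], (V_conj (inv x) n) as [m Hm].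
  exists m. intros y Hy. apply Hn.
  replace (mul (inv (inv x)) (inv y))
    with (mul (mul (inv (inv x)) (inv (mul (inv x) y))) (inv x)); auto.
  now rewrite invMg, invgK, <- !mulA, mulgV, mulg1.
Qed.

Lemma filt_topological_group : is_topological_group filt_group.
Proof.
  split; [|split; [|split; [|split]]].
  - split; [exact mulA|]. split; intros x; split; auto.
  - exact filt_is_topology.
  - exact filt_hausdorff.
  - exact filt_mul_continuous.
  - exact filt_inv_continuous.
Qed.

Lemma filt_morph_continuous (f : T -> T) :
  (forall x y, f (mul x y) = mul (f x) (f y)) ->
  (forall n, exists m, forall v, V m v -> V n (f v)) -> @continuous filt_group f.
Proof.
  intros fM Hf U HU. rewrite filt_openP in *. intros x Ux.
  destruct (HU _ Ux) as [n Hn], (Hf n) as [m Hm].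
  exists m. intros y Hy. apply Hn.
  rewrite <- (morphV f fM), <- fM. auto.
Qed.

Section OpenSubgroup.

Variable H : subgroup filt_group.
Hypothesis V0H : forall x, V 0 x -> sg_pred H x.

Lemma filt_open_subgroup_closed : closed_subset (sg_pred H).
Proof.
  apply filt_openP. intros x Hx. exists 0%nat. intros y Hy Hy'. apply Hx.
  rewrite <- (mulKVg y x), <- (invgK (mul (inv y) x)), invMg, invgK.
  apply (sg_mul _ H); [assumption|]. apply (sg_inv _ H), V0H, Hy.
Qed.

Lemma sub_openP (U : subTopGrp filt_group H -> Prop) :
  opn U <-> forall a, U a -> exists n, forall b,
    V n (mul (inv (proj1_sig a)) (proj1_sig b)) -> U b.
Proof.
  split.
  - intros [W [HW HUW]] a Ua. apply HUW in Ua.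
    destruct (proj1 (filt_openP W) HW _ Ua) as [n Hn].
    exists n. intros b Hb. now apply HUW, Hn.
  - intros HU. exists (fun y => exists b, proj1_sig b = y /\ U b). split.
    + apply filt_openP. intros y [a [<- Ua]]. destruct (HU a Ua) as [n Hn].
      exists n. intros z Hz.
      assert (Hz' : sg_pred H z).
      { rewrite <- (mulKVg (proj1_sig a) z). apply (sg_mul _ H).
        - apply proj2_sig.
        - apply V0H, (V_le 0 n); [lia | exact Hz]. }
      exists (exist _ z Hz'). split; [reflexivity|]. now apply Hn.
    + intros a. split; [intros Ua; now exists a|].
      intros [b [Eb Ub]]. destruct a as [a Ha], b as [b Hb]. cbn in Eb. subst b.
      now rewrite (proof_irrelevance _ Ha Hb).
Qed.

Lemma filt_sub_precompact :
  (forall n, exists F : list (subTopGrp filt_group H), forall x : subTopGrp filt_group H,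
     exists a, In a F /\ V n (mul (inv (proj1_sig a)) (proj1_sig x))) ->
  precompact (subTopGrp filt_group H).
Proof.
  intros HF U [W [HW [W1 WU]]]. rewrite sub_openP in HW.
  destruct (HW _ W1) as [n Hn], (HF n) as [F HFn].
  exists F. intros x. destruct (HFn x) as [a [Fa Ha]].
  exists a, (gmul (ginv a) x). split; [|split].
  - exact Fa.
  - apply WU, Hn. cbn. now rewrite invg1, mul1g.
  - destruct a as [a Ha'], x as [x Hx]. apply subset_eq_compat. cbn.
    symmetry. apply mulKVg.
Qed.

End OpenSubgroup.

End GroupFiltration.

Open Scope Z_scope.

Definition finite_support (c : Z -> bool) : Prop :=
  exists B : nat, forall k, Z.of_nat B < Z.abs k -> c k = false.

Definition config := { c : Z -> bool | finite_support c }.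

Definition lit (c : config) : Z -> bool := proj1_sig c.

Lemma config_ext (a b : config) : (forall k, lit a k = lit b k) -> a = b.
Proof.
  destruct a as [a Ha], b as [b Hb]. intros E.
  apply subset_eq_compat, functional_extensionality, E.
Qed.

Lemma finite_support_lit (c : config) :
  exists B : nat, forall k, Z.of_nat B < Z.abs k -> lit c k = false.
Proof. exact (proj2_sig c). Qed.

Lemma finite_support_nil : finite_support (fun _ => false).
Proof. now exists 0%nat. Qed.
Definition cnil : config := exist _ _ finite_support_nil.

Lemma finite_support_xor (a b : config) : finite_support (fun k => xorb (lit a k) (lit b k)).
Proof.
  destruct (finite_support_lit a) as [A HA], (finite_support_lit b) as [B HB].
  exists (Nat.max A B). intros k Hk. rewrite HA, HB by lia. reflexivity.
Qed.
Definition cxor (a b : config) : config := exist _ _ (finite_support_xor a b).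

Lemma finite_support_shift (n : Z) (a : config) : finite_support (fun k => lit a (k - n)).
Proof.
  destruct (finite_support_lit a) as [A HA].
  exists (A + Z.to_nat (Z.abs n))%nat. intros k Hk. apply HA. lia.
Qed.
Definition cshift (n : Z) (a : config) : config := exist _ _ (finite_support_shift n a).

Lemma finite_support_point (j : Z) : finite_support (fun k => k =? j).
Proof. exists (Z.to_nat (Z.abs j)). intros k Hk. apply Z.eqb_neq. lia. Qed.
Definition cpoint (j : Z) : config := exist _ _ (finite_support_point j).

Lemma finite_support_upto (j : Z) : finite_support (fun k => (0 <=? k) && (k <=? j)).
Proof.
  exists (Z.to_nat (Z.abs j)). intros k Hk.
  destruct (Z.leb_spec 0 k), (Z.leb_spec k j); auto; lia.
Qed.
Definition cupto (j : Z) : config := exist _ _ (finite_support_upto j).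

Lemma lit_cnil k : lit cnil k = false. Proof. reflexivity. Qed.
Lemma lit_cxor a b k : lit (cxor a b) k = xorb (lit a k) (lit b k). Proof. reflexivity. Qed.
Lemma lit_cshift n a k : lit (cshift n a) k = lit a (k - n). Proof. reflexivity. Qed.
Lemma lit_cpoint j k : lit (cpoint j) k = (k =? j). Proof. reflexivity. Qed.
Lemma lit_cupto j k : lit (cupto j) k = (0 <=? k) && (k <=? j). Proof. reflexivity. Qed.

Lemma cxorA a b c : cxor a (cxor b c) = cxor (cxor a b) c.
Proof. apply config_ext. intros k. rewrite !lit_cxor. symmetry. apply xorb_assoc_reverse. Qed.
Lemma cxorC a b : cxor a b = cxor b a.
Proof. apply config_ext. intros k. apply xorb_comm. Qed.
Lemma cxor0c a : cxor cnil a = a.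
Proof. now apply config_ext. Qed.
Lemma cxorc0 a : cxor a cnil = a.
Proof. rewrite cxorC. apply cxor0c. Qed.
Lemma cxorK a : cxor a a = cnil.
Proof. apply config_ext. intros k. apply xorb_nilpotent. Qed.

Lemma cshift0 a : cshift 0 a = a.
Proof. apply config_ext. intros k. rewrite lit_cshift. f_equal. lia. Qed.
Lemma cshiftD m n a : cshift m (cshift n a) = cshift (m + n) a.
Proof. apply config_ext. intros k. rewrite !lit_cshift. f_equal. lia. Qed.
Lemma cshift_xor n a b : cshift n (cxor a b) = cxor (cshift n a) (cshift n b).
Proof. now apply config_ext. Qed.
Lemma cshift_nil n : cshift n cnil = cnil.
Proof. now apply config_ext. Qed.
Lemma cpoint_shift k : cpoint k = cshift k (cpoint 0).
Proof.
  apply config_ext. intros j. rewrite lit_cshift, !lit_cpoint.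
  destruct (Z.eqb_spec j k), (Z.eqb_spec (j - k) 0); auto; lia.
Qed.

Definition csum (l : list Z) : config := fold_right (fun k c => cxor (cpoint k) c) cnil l.

Lemma csum_cons k l : csum (k :: l) = cxor (cpoint k) (csum l).
Proof. reflexivity. Qed.

Lemma lit_csum l k : NoDup l -> lit (csum l) k = true <-> In k l.
Proof.
  induction 1 as [|j l Hj Hl IHl]; [easy|].
  rewrite csum_cons, lit_cxor, lit_cpoint. destruct (Z.eqb_spec k j) as [->|Hkj].
  - assert (E : lit (csum l) j = false) by (apply not_true_iff_false; now rewrite IHl).
    rewrite E. cbn. tauto.
  - rewrite IHl. cbn. split; [tauto|]. intros [E|E]; [congruence|exact E].
Qed.

Definition window (n : nat) : list Z :=
  map (fun i => Z.of_nat i - Z.of_nat n) (seq 0 (2 * n + 1)).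

Lemma in_window n k : In k (window n) <-> Z.abs k <= Z.of_nat n.
Proof.
  unfold window. rewrite in_map_iff. split.
  - intros [i [<- Hi]]. apply in_seq in Hi. lia.
  - intros Hk. exists (Z.to_nat (k + Z.of_nat n)). rewrite in_seq. lia.
Qed.

Lemma NoDup_window n : NoDup (window n).
Proof.
  apply Injective_map_NoDup; [|apply seq_NoDup].
  intros i j E. lia.
Qed.

Definition clip (n : nat) (c : config) : list Z := filter (lit c) (window n).

Lemma lit_csum_clip n c k : Z.abs k <= Z.of_nat n -> lit (csum (clip n c)) k = lit c k.
Proof.
  intros Hk. apply eq_true_iff_eq.
  rewrite lit_csum by apply NoDup_filter, NoDup_window.
  unfold clip. rewrite filter_In, in_window. tauto.
Qed.

Lemma config_csum c : exists l, NoDup l /\ c = csum l.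
Proof.
  destruct (finite_support_lit c) as [B HB].
  exists (clip B c). split; [apply NoDup_filter, NoDup_window|].
  apply config_ext. intros k. symmetry.
  destruct (Z_le_gt_dec (Z.abs k) (Z.of_nat B)).
  - now apply lit_csum_clip.
  - rewrite HB by lia. apply not_true_iff_false.
    rewrite lit_csum by apply NoDup_filter, NoDup_window.
    unfold clip. rewrite filter_In, in_window. lia.
Qed.

Fixpoint sublists {A : Type} (l : list A) : list (list A) :=
  match l with
  | nil => nil :: nil
  | a :: l => sublists l ++ map (cons a) (sublists l)
  end.

Lemma filter_in_sublists {A : Type} (f : A -> bool) l : In (filter f l) (sublists l).
Proof.
  induction l as [|a l IHl]; cbn; [now left|].
  apply in_or_app. destruct (f a); [right; now apply in_map|now left].
Qed.

Lemma finite_support_diff (c : config) :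
  finite_support (fun k => if 0 <=? k then xorb (lit c k) (lit c (k + 1)) else lit c k).
Proof.
  destruct (finite_support_lit c) as [B HB]. exists B. intros k Hk.
  destruct (Z.leb_spec 0 k); rewrite !HB by lia; reflexivity.
Qed.
Definition cdiff (c : config) : config := exist _ _ (finite_support_diff c).

Lemma lit_cdiff c k :
  lit (cdiff c) k = if 0 <=? k then xorb (lit c k) (lit c (k + 1)) else lit c k.
Proof. reflexivity. Qed.

Lemma cdiff_xor a b : cdiff (cxor a b) = cxor (cdiff a) (cdiff b).
Proof.
  apply config_ext. intros k. rewrite lit_cxor, !lit_cdiff, !lit_cxor.
  destruct (0 <=? k); [|reflexivity].
  now destruct (lit a k), (lit b k), (lit a (k + 1)), (lit b (k + 1)).
Qed.

Lemma cdiff_nil : cdiff cnil = cnil.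
Proof. apply config_ext. intros k. rewrite lit_cdiff. now destruct (0 <=? k). Qed.

Lemma cdiff_eq0 c : cdiff c = cnil -> c = cnil.
Proof.
  intros E. assert (Hc : forall k, lit (cdiff c) k = false) by now rewrite E.
  assert (Hstep : forall j, 0 <= j -> lit c (j + 1) = lit c j).
  { intros j Hj. specialize (Hc j). rewrite lit_cdiff in Hc.
    destruct (Z.leb_spec 0 j); [|lia]. now destruct (lit c j), (lit c (j + 1)). }
  destruct (finite_support_lit c) as [B HB].
  apply config_ext. intros k. rewrite lit_cnil.
  destruct (Z.leb_spec 0 k) as [Hk|Hk].
  - assert (Hconst : forall i : nat, lit c (k + Z.of_nat i) = lit c k).
    { induction i as [|i IHi]; [f_equal; lia|].
      rewrite <- IHi. replace (k + Z.of_nat (S i)) with (k + Z.of_nat i + 1) by lia.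
      apply Hstep. lia. }
    rewrite <- (Hconst (S B)). apply HB. lia.
  - specialize (Hc k). rewrite lit_cdiff in Hc. now destruct (Z.leb_spec 0 k); [lia|].
Qed.

Lemma cdiff_inj a b : cdiff a = cdiff b -> a = b.
Proof.
  intros E. rewrite <- (cxor0c b), <- (cxorK a), <- cxorA, (cxorC a b), cxorA.
  replace (cxor a b) with cnil; [now rewrite cxor0c|].
  symmetry. apply cdiff_eq0. now rewrite cdiff_xor, E, cxorK.
Qed.

Lemma cdiff_upto j : 0 <= j -> cdiff (cupto j) = cpoint j.
Proof.
  intros Hj. apply config_ext. intros k. rewrite lit_cdiff, !lit_cupto, lit_cpoint.
  destruct (Z.leb_spec 0 k), (Z.leb_spec 0 (k + 1)), (Z.leb_spec k j), (Z.leb_spec (k + 1) j),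
    (Z.eqb_spec k j); cbn; auto; lia.
Qed.

Lemma cdiff_point k : k < 0 -> cdiff (cpoint k) = cpoint k.
Proof.
  intros Hk. apply config_ext. intros i. rewrite lit_cdiff, !lit_cpoint.
  destruct (Z.leb_spec 0 i); [|reflexivity].
  destruct (Z.eqb_spec i k), (Z.eqb_spec (i + 1) k); cbn; auto; lia.
Qed.

Lemma cdiff_surj c : exists a, cdiff a = c.
Proof.
  destruct (config_csum c) as [l [_ ->]]. induction l as [|k l [a Ha]].
  - exists cnil. apply cdiff_nil.
  - destruct (Z_lt_le_dec k 0) as [Hk|Hk].
    + exists (cxor (cpoint k) a). now rewrite cdiff_xor, cdiff_point, Ha.
    + exists (cxor (cupto k) a). now rewrite cdiff_xor, cdiff_upto, Ha.
Qed.

Definition zigzag (k : Z) : nat := Z.to_nat (if 0 <=? k then 2 * k else - 2 * k - 1).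

Lemma zigzag_ge k : Z.abs k <= Z.of_nat (zigzag k).
Proof. unfold zigzag. destruct (Z.leb_spec 0 k); lia. Qed.

Lemma zigzag_eqb j k : (zigzag j =? zigzag k)%nat = (j =? k).
Proof.
  destruct (Z.eqb_spec j k) as [->|E]; [apply Nat.eqb_refl|].
  apply Nat.eqb_neq. unfold zigzag. destruct (Z.leb_spec 0 j), (Z.leb_spec 0 k); lia.
Qed.

Lemma finite_support_bits (n : nat) : finite_support (fun k => Nat.testbit n (zigzag k)).
Proof.
  exists n. intros k Hk. apply Nat.bits_above_log2.
  pose proof (Nat.log2_le_lin n ltac:(lia)). pose proof (zigzag_ge k). lia.
Qed.
Definition cbits (n : nat) : config := exist _ _ (finite_support_bits n).

Lemma cbits_surj c : exists n, cbits n = c.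
Proof.
  destruct (config_csum c) as [l [_ ->]].
  exists (fold_right (fun k n => Nat.lxor (2 ^ zigzag k) n) 0%nat l).
  induction l as [|k l IHl]; apply config_ext; intros j; cbn [fold_right].
  - apply Nat.bits_0.
  - rewrite csum_cons, lit_cxor, <- IHl, lit_cpoint. cbn [lit cbits proj1_sig].
    now rewrite Nat.lxor_spec, Nat.pow2_bits_eqb, zigzag_eqb, Z.eqb_sym.
Qed.

(* The lamplighter group (Z/2) wr Z: [(a, m)] is the configuration [a] with the
   lighter at [m], and the lighter shifts the configuration it meets. *)
Definition wreath : Type := (config * Z)%type.

Definition wmul (x y : wreath) : wreath :=
  (cxor (fst x) (cshift (snd x) (fst y)), snd x + snd y).
Definition winv (x : wreath) : wreath := (cshift (- snd x) (fst x), - snd x).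
Definition w1 : wreath := (cnil, 0).

Lemma mulwA x y z : wmul x (wmul y z) = wmul (wmul x y) z.
Proof.
  destruct x as [a m], y as [b n], z as [c p]. unfold wmul; cbn.
  f_equal; [|lia]. now rewrite cshift_xor, cshiftD, cxorA.
Qed.

Lemma mul1w x : wmul w1 x = x.
Proof. destruct x as [a m]. unfold wmul, w1; cbn. now rewrite cshift0, cxor0c. Qed.

Lemma mulw1 x : wmul x w1 = x.
Proof. destruct x as [a m]. unfold wmul, w1; cbn. now rewrite cshift_nil, cxorc0, Z.add_0_r. Qed.

Lemma mulVw x : wmul (winv x) x = w1.
Proof. destruct x as [a m]. unfold wmul, winv, w1; cbn. rewrite cxorK. f_equal. lia. Qed.

Lemma mulwV x : wmul x (winv x) = w1.
Proof.
  destruct x as [a m]. unfold wmul, winv, w1; cbn.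
  now rewrite cshiftD, Z.add_opp_diag_r, cshift0, cxorK.
Qed.

Definition dark (n : nat) (x : wreath) : Prop :=
  snd x = 0 /\ forall k, Z.abs k <= Z.of_nat n -> lit (fst x) k = false.

Lemma dark_le m n x : (m <= n)%nat -> dark n x -> dark m x.
Proof. intros Hmn [H0 Hx]. split; [exact H0|]. intros k Hk. apply Hx. lia. Qed.

Lemma dark1 n : dark n w1.
Proof. now split. Qed.

Lemma darkM n x y : dark n x -> dark n y -> dark n (wmul x y).
Proof.
  destruct x as [a p], y as [b q]. intros [Hp Ha] [Hq Hb]; cbn [fst snd] in *; subst.
  unfold wmul; split; cbn [fst snd]; [lia|].
  intros k Hk. rewrite lit_cxor, lit_cshift, Ha, Z.sub_0_r, Hb; auto.
Qed.

Lemma darkV n x : dark n x -> dark n (winv x).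
Proof.
  destruct x as [a p]. intros [Hp Ha]; cbn [fst snd] in *; subst.
  unfold winv; split; cbn [fst snd]; [lia|]. intros k Hk. rewrite lit_cshift. apply Ha. lia.
Qed.

Lemma dark_sep x : (forall n, dark n x) -> x = w1.
Proof.
  destruct x as [a p]. intros H. destruct (H 0%nat) as [Hp _]; cbn in Hp; subst.
  unfold w1. f_equal. apply config_ext. intros k.
  apply (proj2 (H (Z.to_nat (Z.abs k)))). lia.
Qed.

Lemma dark_conj g n : exists m, forall v, dark m v -> dark n (wmul (wmul (winv g) v) g).
Proof.
  destruct g as [a p]. exists (n + Z.to_nat (Z.abs p))%nat.
  intros [b q] [Hq Hb]; cbn [fst snd] in *; subst.
  unfold wmul, winv; split; cbn [fst snd]; [lia|].
  intros k Hk. rewrite !lit_cxor, !lit_cshift, Hb by lia.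
  replace (k - (- p + 0)) with (k - - p) by lia. now destruct (lit a (k - - p)).
Qed.

Local Hint Resolve mulwA mul1w mulw1 mulVw mulwV dark_le dark1 darkM darkV dark_sep dark_conj
  : core.

Definition lamplighter : TopGrp := filt_group wreath wmul winv w1 dark.

Lemma lamplighter_topological_group : is_topological_group lamplighter.
Proof. apply filt_topological_group; eauto. Qed.

Lemma lamplighter_metrizable : metrizable lamplighter.
Proof. apply filt_metrizable; eauto. Qed.

Definition wreath_enum (m : nat) : wreath :=
  let (p, q) := Cantor.of_nat m in
  let (i, j) := Cantor.of_nat q in (cbits p, Z.of_nat i - Z.of_nat j).

Lemma wreath_enum_surj x : exists m, wreath_enum m = x.
Proof.
  destruct x as [c z]. destruct (cbits_surj c) as [p <-].
  exists (Cantor.to_nat (p, Cantor.to_nat (Z.to_nat z, Z.to_nat (- z)))).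
  unfold wreath_enum. rewrite !Cantor.cancel_of_to. f_equal. lia.
Qed.

Lemma lamplighter_separable : separable lamplighter.
Proof.
  exists wreath_enum. intros U _ [x Ux]. destruct (wreath_enum_surj x) as [m <-]. now exists m.
Qed.

Lemma conj_lamps c b : wmul (wmul c (b, 0)) (winv c) = (cshift (snd c) b, 0).
Proof.
  destruct c as [a m]. unfold wmul, winv; cbn [fst snd]. f_equal; [|lia].
  rewrite cshiftD, Z.add_0_r, Z.add_opp_diag_r, cshift0, <- cxorA, (cxorC _ a), cxorA.
  now rewrite cxorK, cxor0c.
Qed.

Section Automorphism.

Variable f : wreath -> wreath.
Hypothesis fM : forall x y, f (wmul x y) = wmul (f x) (f y).
Hypothesis f_inj : forall x y, f x = f y -> x = y.

Lemma aut1 : f w1 = w1.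
Proof. eapply morph1; eauto. Qed.

Lemma autV x : f (winv x) = winv (f x).
Proof. eapply morphV; eauto. Qed.

(* [(b, 0)] squares to [w1], and an element squaring to [w1] has lighter at [0]. *)
Lemma aut_lamps_snd b : snd (f (b, 0)) = 0.
Proof.
  assert (E : wmul (b, 0) (b, 0) = w1)
    by (unfold wmul, w1; cbn [fst snd]; now rewrite cshift0, cxorK).
  apply (f_equal f) in E. rewrite fM, aut1 in E. apply (f_equal snd) in E.
  unfold wmul, w1 in E. cbn [snd] in E. lia.
Qed.

Definition aut_base (b : config) : config := fst (f (b, 0)).

Lemma aut_lamps b : f (b, 0) = (aut_base b, 0).
Proof. rewrite (surjective_pairing (f (b, 0))), aut_lamps_snd. reflexivity. Qed.

Lemma aut_base_nil : aut_base cnil = cnil.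
Proof. unfold aut_base. change (cnil, 0) with w1. now rewrite aut1. Qed.

Lemma aut_base_xor b c : aut_base (cxor b c) = cxor (aut_base b) (aut_base c).
Proof.
  assert (E : forall b c, wmul (b, 0) (c, 0) = (cxor b c, 0))
    by (intros; unfold wmul; cbn [fst snd]; now rewrite cshift0).
  unfold aut_base at 1. now rewrite <- E, fM, !aut_lamps, E.
Qed.

Definition aut_step (j : Z) : Z := snd (f (cnil, j)).

Lemma aut_step_lin k : aut_step k = k * aut_step 1.
Proof.
  assert (stepD : forall i j, aut_step (i + j) = aut_step i + aut_step j).
  { intros i j. unfold aut_step.
    replace (cnil, i + j) with (wmul (cnil, i) (cnil, j))
      by (unfold wmul; cbn [fst snd]; now rewrite cshift_nil, cxor0c).
    now rewrite fM. }
  assert (step0 : aut_step 0 = 0) by (unfold aut_step; change (cnil, 0) with w1; now rewrite aut1).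
  induction k using Z.peano_ind.
  - rewrite step0. lia.
  - rewrite <- Z.add_1_r, stepD, IHk. lia.
  - specialize (stepD (Z.pred k) 1). rewrite Z.add_1_r, Z.succ_pred in stepD. lia.
Qed.

Lemma aut_base_shift j b : aut_base (cshift j b) = cshift (aut_step j) (aut_base b).
Proof.
  unfold aut_base at 1.
  rewrite <- (conj_lamps (cnil, j)), !fM, autV, aut_lamps, conj_lamps. reflexivity.
Qed.

Lemma aut_step1_neq0 : aut_step 1 <> 0.
Proof.
  intros H. assert (E : f (cshift 1 (cpoint 0), 0) = f (cpoint 0, 0))
    by now rewrite !aut_lamps, aut_base_shift, aut_step_lin, H, cshift0.
  apply f_inj, (f_equal (fun x => lit (fst x) 1)) in E. discriminate.
Qed.

Lemma lit_aut_base_point k i :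
  lit (aut_base (cpoint k)) i = lit (aut_base (cpoint 0)) (i - k * aut_step 1).
Proof. now rewrite cpoint_shift, aut_base_shift, lit_cshift, aut_step_lin. Qed.

(* [aut_base] moves the lamp at [k] to lamps near [k * aut_step 1], far from the origin. *)
Lemma aut_dark n : exists m, forall v, dark m v -> dark n (f v).
Proof.
  destruct (finite_support_lit (aut_base (cpoint 0))) as [P HP].
  exists (n + P)%nat. intros [b z] [Hz Hb]; cbn [fst snd] in Hz, Hb; subst z.
  rewrite aut_lamps. split; [reflexivity|]. cbn [fst].
  destruct (config_csum b) as [l [Hl ->]].
  assert (Hfar : forall k, In k l -> Z.of_nat (n + P) < Z.abs k).
  { intros k Hk. apply lit_csum in Hk; [|exact Hl].
    destruct (Z_lt_le_dec (Z.of_nat (n + P)) (Z.abs k)); [assumption|].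
    rewrite Hb in Hk by assumption. discriminate. }
  clear Hb Hl. induction l as [|k l IHl]; intros i Hi.
  - change (csum nil) with cnil. now rewrite aut_base_nil.
  - rewrite csum_cons, aut_base_xor, lit_cxor, IHl, lit_aut_base_point; auto using in_cons.
    rewrite HP; [reflexivity|].
    pose proof (Hfar k (in_eq k l)). pose proof aut_step1_neq0.
    assert (Z.abs k <= Z.abs (k * aut_step 1)) by (rewrite Z.abs_mul; nia). lia.
Qed.

End Automorphism.

Lemma lamplighter_g_reversible : g_reversible lamplighter.
Proof.
  apply g_reversible_of_continuous_automorphisms. intros f [fM [f_inj _]].
  apply filt_morph_continuous; eauto. apply aut_dark; assumption.
Qed.

Definition lamps : subgroup lamplighter.
Proof.
  refine {| sg_pred := fun x : lamplighter => snd x = 0 |}; cbn; intros; lia.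
Defined.

Definition lamp_at (c : config) : subTopGrp lamplighter lamps := exist _ (c, 0) eq_refl.

Lemma lampsP (a : subTopGrp lamplighter lamps) : exists c, a = lamp_at c.
Proof.
  destruct a as [[c z] Hz]. cbn in Hz. subst z. exists c. now apply subset_eq_compat.
Qed.

Lemma lamp_at_mul c d : gmul (lamp_at c) (lamp_at d) = lamp_at (cxor c d).
Proof.
  apply subset_eq_compat. change (wmul (c, 0) (d, 0) = (cxor c d, 0)).
  unfold wmul; cbn [fst snd]. now rewrite cshift0.
Qed.

Lemma lamp_at_inj c d : lamp_at c = lamp_at d -> c = d.
Proof. intros E. now apply (f_equal (fun a => fst (proj1_sig a))) in E. Qed.

Lemma dark_lamps n c d :
  dark n (wmul (winv (c, 0)) (d, 0)) <-> forall k, Z.abs k <= Z.of_nat n -> lit c k = lit d k.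
Proof.
  replace (wmul (winv (c, 0)) (d, 0)) with (cxor c d, 0)
    by (unfold wmul, winv; cbn [fst snd]; now rewrite !cshift0).
  unfold dark; cbn [fst snd]. split.
  - intros [_ H] k Hk. specialize (H k Hk). rewrite lit_cxor in H.
    now destruct (lit c k), (lit d k).
  - intros H. split; [reflexivity|]. intros k Hk.
    rewrite lit_cxor, H by assumption. apply xorb_nilpotent.
Qed.

Lemma dark0_lamps x : dark 0 x -> sg_pred lamps x.
Proof. now intros []. Qed.

Lemma lamps_openP (U : subTopGrp lamplighter lamps -> Prop) :
  opn U <-> forall c, U (lamp_at c) -> exists n, forall d,
    (forall k, Z.abs k <= Z.of_nat n -> lit c k = lit d k) -> U (lamp_at d).
Proof.
  rewrite (sub_openP _ _ _ _ mulwA mul1w mulwV _ dark_le dark1 dark_sep _ dark0_lamps).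
  split.
  - intros HU c Uc. destruct (HU _ Uc) as [n Hn]. exists n. intros d Hd.
    now apply Hn, dark_lamps.
  - intros HU a Ua. destruct (lampsP a) as [c ->]. destruct (HU c Ua) as [n Hn].
    exists n. intros b Hb. destruct (lampsP b) as [d ->]. now apply Hn, dark_lamps.
Qed.

Lemma lamps_closed : closed_subset (sg_pred lamps).
Proof. apply filt_open_subgroup_closed; eauto using dark0_lamps. Qed.

Lemma lamps_countable : countable_set (sg_pred lamps).
Proof. exists wreath_enum. intros x _. apply wreath_enum_surj. Qed.

Lemma lamps_precompact : precompact (subTopGrp lamplighter lamps).
Proof.
  apply filt_sub_precompact; eauto using dark0_lamps.
  intros n. exists (map (fun l => lamp_at (csum l)) (sublists (window n))).
  intros x. destruct (lampsP x) as [c ->]. exists (lamp_at (csum (clip n c))). split.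
  - apply (in_map (fun l => lamp_at (csum l))), filter_in_sublists.
  - apply dark_lamps. intros k Hk. now apply lit_csum_clip.
Qed.

Definition lamps_diff (a : subTopGrp lamplighter lamps) : subTopGrp lamplighter lamps :=
  lamp_at (cdiff (fst (proj1_sig a))).

Lemma lamps_diff_at c : lamps_diff (lamp_at c) = lamp_at (cdiff c).
Proof. reflexivity. Qed.

Lemma lamps_diff_automorphism : automorphism lamps_diff.
Proof.
  split; [|split].
  - intros a b. destruct (lampsP a) as [c ->], (lampsP b) as [d ->].
    now rewrite lamp_at_mul, !lamps_diff_at, lamp_at_mul, cdiff_xor.
  - intros a b. destruct (lampsP a) as [c ->], (lampsP b) as [d ->].
    rewrite !lamps_diff_at. intros E. now apply lamp_at_inj, cdiff_inj in E as ->.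
  - intros b. destruct (lampsP b) as [c ->], (cdiff_surj c) as [a <-].
    now exists (lamp_at a).
Qed.

Lemma lamps_diff_continuous : continuous lamps_diff.
Proof.
  intros U HU. rewrite lamps_openP in *. intros c Uc. rewrite lamps_diff_at in Uc.
  destruct (HU _ Uc) as [n Hn]. exists (S n). intros d Hd. rewrite lamps_diff_at. apply Hn.
  intros k Hk. rewrite !lit_cdiff, (Hd k), (Hd (k + 1)) by lia. reflexivity.
Qed.

(* The open set where the lamp at 0 is off has an image that is no neighbourhood of 1:
   the only preimage of the lamp at [n + 1] is [cupto (n + 1)], which lights 0. *)
Lemma lamps_diff_not_open : ~ open_map lamps_diff.
Proof.
  intros Hop. set (U := fun a : subTopGrp lamplighter lamps => lit (fst (proj1_sig a)) 0 = false).
  assert (HU : opn U).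
  { apply lamps_openP. intros c Uc. exists 0%nat. intros d Hd.
    unfold U in *; cbn in *. rewrite <- Hd; [exact Uc | lia]. }
  specialize (Hop U HU). rewrite lamps_openP in Hop.
  destruct (Hop cnil) as [n Hn].
  { exists (lamp_at cnil). now rewrite lamps_diff_at, cdiff_nil. }
  destruct (Hn (cpoint (Z.of_nat (S n)))) as [x [Ux Ex]].
  { intros k Hk. rewrite lit_cnil, lit_cpoint. symmetry. apply Z.eqb_neq. lia. }
  destruct (lampsP x) as [c ->].
  rewrite lamps_diff_at, <- cdiff_upto in Ex by lia.
  apply lamp_at_inj, cdiff_inj in Ex. subst c. discriminate Ux.
Qed.

Lemma lamps_not_g_reversible : ~ g_reversible (subTopGrp lamplighter lamps).
Proof.
  intros Hrev. apply lamps_diff_not_open, Hrev.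
  - apply lamps_diff_automorphism.
  - apply lamps_diff_continuous.
Qed.

Theorem corollary8p3 :
  exists G : TopGrp,
    is_topological_group G /\ separable G /\ metrizable G /\ g_reversible G /\
    exists H : subgroup G,
      closed_subset (sg_pred H) /\ countable_set (sg_pred H) /\
      precompact (subTopGrp G H) /\ ~ g_reversible (subTopGrp G H).
Proof.
  exists lamplighter.
  split; [exact lamplighter_topological_group|].
  split; [exact lamplighter_separable|].
  split; [exact lamplighter_metrizable|].
  split; [exact lamplighter_g_reversible|].
  exists lamps. repeat split.
  - exact lamps_closed.
  - exact lamps_countable.
  - exact lamps_precompact.
  - exact lamps_not_g_reversible.
Qed.
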